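(* Let $\rho\in(0,1)$ and $\sigma_x<\sigma_y$. Let $r>0$ and $\theta\in[\theta_M,\frac{5\pi}{4}]$, and let $\mathbf a=(x_1,y_1)=(x_2^*+r\cos\theta,\,x_2^*+r\sin\theta)$. If $\mathbf a\neq\mathbf a^*$ and $x_1^2+y_1^2>2x_2^{*2}$, then $K(\mathbf a,\mathbf b^* )>0$.
   Context: Standing setup. Fix $\sigma_x,\sigma_y>0$ and $\rho\in(-1,1)$, and let $(\xi,\eta)$ be a bivariate normal random vector with mean $(0,0)$ and covariance matrix $\Sigma=\begin{pmatrix}\sigma_x^2&\rho\sigma_x\sigma_y\\ \rho\sigma_x\sigma_y&\sigma_y^2\end{pmatrix}$. Player I (the minimizer) chooses $\mathbf a=(x_1,y_1)\in\mathbb R^2$ and Player II (the maximizer) chooses $\mathbf b=(x_2,y_2)\in\mathbb R^2$. Let $C_1(\mathbf a,\mathbf b)=\{(x,y):(x_1-x)^2+(y_1-y)^2<(x_2-x)^2+(y_2-y)^2\}$ and $C_2(\mathbf a,\mathbf b)=\{(x,y):(x_1-x)^2+(y_1-y)^2>(x_2-x)^2+(y_2-y)^2\}$. The payoff to Player II (paid by Player I) is $K(\mathbf a,\mathbf b)=x_1+y_1$ if $\mathbf a=\mathbf b$, and $K(\mathbf a,\mathbf b)=(x_1+y_1)\,P((\xi,\eta)\in C_1(\mathbf a,\mathbf b))+(x_2+y_2)\,P((\xi,\eta)\in C_2(\mathbf a,\mathbf b))$ if $\mathbf a\neq\mathbf b$. For $\mathbf a=(x,y)$ write $-\mathbf a=(-x,-y)$.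 Let $x_2^*=\frac{\sqrt{2\pi(\sigma_x^2+2\rho\sigma_x\sigma_y+\sigma_y^2)}}{4}$, $\mathbf b^*=(x_2^*,x_2^* )$ and $\mathbf a^*=(-x_2^*,-x_2^* )$. With $c=\frac{\sigma_y^2-\sigma_x^2}{2\rho\sigma_x\sigma_y}$, $\theta_M$ denotes the unique angle in $(\pi/2,\pi)$ with $\tan\theta_M=c-\sqrt{c^2+1}$. *)

From Stdlib Require Import Reals Lra ClassicalEpsilon.
Open Scope R_scope.

Definition is_int_R (f : R -> R) (l : R) : Prop :=
  forall eps, 0 < eps -> exists M, forall a b, a <= - M -> M <= b ->
    exists pr : Riemann_integrable f a b, Rabs (RiemannInt pr - l) < eps.

(* Density of the centred bivariate normal with covariance
   [[sx^2, rho sx sy],[rho sx sy, sy^2]]. *)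
Definition binorm_density (sx sy rho : R) (x y : R) : R :=
  / (2 * PI * sx * sy * sqrt (1 - rho ^ 2)) *
  exp (- / (2 * (1 - rho ^ 2)) *
       (x ^ 2 / sx ^ 2 - 2 * rho * x * y / (sx * sy) + y ^ 2 / sy ^ 2)).

(* l is the probability that (xi,eta) lies in the set with indicator ind:
   iterated integral of density * indicator over R^2. *)
Definition is_prob (sx sy rho : R) (ind : R -> R -> R) (l : R) : Prop :=
  exists g : R -> R,
    (forall x, is_int_R (fun y => binorm_density sx sy rho x y * ind x y) (g x))
    /\ is_int_R g l.

Definition prob (sx sy rho : R) (ind : R -> R -> R) : R :=
  epsilon (inhabits 0) (fun l => is_prob sx sy rho ind l).

Definition sqdist (p : R * R) (x y : R) : R :=
  (fst p - x) ^ 2 + (snd p - y) ^ 2.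

Definition ind_C1 (a b : R * R) (x y : R) : R :=
  if Rlt_dec (sqdist a x y) (sqdist b x y) then 1 else 0.
Definition ind_C2 (a b : R * R) (x y : R) : R :=
  if Rlt_dec (sqdist b x y) (sqdist a x y) then 1 else 0.

Definition pt_eqb (a b : R * R) : bool :=
  if Req_EM_T (fst a) (fst b) then
    (if Req_EM_T (snd a) (snd b) then true else false)
  else false.

Definition K (sx sy rho : R) (a b : R * R) : R :=
  if pt_eqb a b then fst a + snd a
  else (fst a + snd a) * prob sx sy rho (ind_C1 a b)
     + (fst b + snd b) * prob sx sy rho (ind_C2 a b).

Definition x2star (sx sy rho : R) : R :=
  sqrt (2 * PI * (sx ^ 2 + 2 * rho * sx * sy + sy ^ 2)) / 4.

Definition c_const (sx sy rho : R) : R :=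
  (sy ^ 2 - sx ^ 2) / (2 * rho * sx * sy).

From Stdlib Require Import Reals Lra FunctionalExtensionality ClassicalEpsilon.
From Coquelicot Require Import Coquelicot.
Open Scope R_scope.

(* Write [a = bstar + r (cos th, sin th)] with [bstar = (x2star, x2star)], [C = cos th] and
   [S = sin th]. The cell of [a] is the half-plane [C xi + S eta > m] with
   [m = x2star (C + S) + r / 2], and [m > 0] is exactly the hypothesis [|a|^2 > 2 x2star^2].
   Its probability is [1 - Phi (m / sg)], [sg] the standard deviation of [C xi + S eta], so
   [K = 2 x2star - r k (1 - Phi u)] with [k = - (C + S)] and [u = m / sg]. This is clearly
   positive when [k <= 0]. Otherwise [k^2 <= 2], and on the arc [th <= 5 PI / 4] the hypotheses
   [sx < sy], [rho > 0] give [k sg <= s], the standard deviation of [xi + eta]. As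
   [x2star = sqrt (2 PI) / 4 * s] and [r = 2 (sg u + x2star k)], positivity reduces to
   [sqrt (2 PI) / 4 (2 Phi u - 1) > u (1 - Phi u)] for [u > 0], a calculus fact about the
   normal distribution function. *)

(** * Calculus on the real line *)

Lemma is_RInt_primitive (F f : R -> R) a b :
  (forall x, is_derive F x (f x)) -> (forall x, continuous f x) ->
  is_RInt f a b (F b - F a).
Proof. intros HD HC; apply (is_RInt_derive F f); auto. Qed.

Lemma RInt_primitive (F f : R -> R) a b :
  (forall x, is_derive F x (f x)) -> (forall x, continuous f x) ->
  RInt f a b = F b - F a.
Proof. intros; apply is_RInt_unique, is_RInt_primitive; auto. Qed.

Lemma ex_RInt_continuous_R (f : R -> R) a b :
  (forall x, continuous f x) -> ex_RInt f a b.
Proof. intros H; apply (ex_RInt_continuous (V := R_CompleteNormedModule)); auto. Qed.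

Lemma mean_value (F f : R -> R) a b : a < b -> (forall x, is_derive F x (f x)) ->
  exists c, a < c < b /\ F b - F a = f c * (b - a).
Proof.
  intros Hab HD. destruct (MVT_cor2 F f a b Hab) as [c [Hc Hac]].
  - intros c _; apply is_derive_Reals, HD.
  - exists c; auto.
Qed.

Lemma mean_value_abs_bound (F f : R -> R) a b B : (forall x, is_derive F x (f x)) ->
  (forall c, Rmin a b <= c <= Rmax a b -> Rabs (f c) <= B) -> Rabs (F b - F a) <= B * Rabs (b - a).
Proof.
  intros HD HB. destruct (Rtotal_order a b) as [H|[H|H]].
  - destruct (mean_value F f a b H HD) as [c [Hc ->]]. rewrite Rabs_mult.
    apply Rmult_le_compat_r; [apply Rabs_pos|]. apply HB.
    rewrite Rmin_left, Rmax_right; lra.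
  - subst. rewrite !Rminus_diag, Rabs_R0, Rmult_0_r. lra.
  - destruct (mean_value F f b a H HD) as [c [Hc Hm]].
    replace (F b - F a) with (f c * (b - a)) by lra. rewrite Rabs_mult.
    apply Rmult_le_compat_r; [apply Rabs_pos|]. apply HB.
    rewrite Rmin_right, Rmax_left; lra.
Qed.

Lemma is_derive_zero_const (F : R -> R) a b : (forall x, is_derive F x 0) -> F a = F b.
Proof.
  intros HD. destruct (Rtotal_order a b) as [H|[H|H]].
  - destruct (mean_value F (fun _ => 0) a b H HD) as [c [_ Hc]]; lra.
  - subst; auto.
  - destruct (mean_value F (fun _ => 0) b a H HD) as [c [_ Hc]]; lra.
Qed.

Lemma continuous_of_is_derive (F : R -> R) (l x : R) : is_derive F x l -> continuous F x.
Proof. intros H; apply (ex_derive_continuous (K := R_AbsRing) (V := R_NormedModule)); exists l; auto. Qed.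

Lemma is_derive_comp_affine (F f : R -> R) a b x : (forall y, is_derive F y (f y)) ->
  is_derive (fun u => F (a * u + b)) x (a * f (a * x + b)).
Proof.
  intros HF.
  apply (is_derive_comp F (fun u => a * u + b)); [apply HF | auto_derive; auto; ring].
Qed.

Lemma continuous_comp_affine (F : R -> R) a b x : (forall y, continuous F y) ->
  continuous (fun y => F (a * y + b)) x.
Proof.
  intros H. apply (continuous_comp (fun y => a * y + b) F); auto.
  apply (continuous_of_is_derive _ a). auto_derive; auto; ring.
Qed.

(** * The standard normal distribution *)

Definition phi (t : R) : R := exp (- (t ^ 2) / 2) / sqrt (2 * PI).

(* Anchored at [Phi 0 = 1/2]; that [Phi] is the normal distribution function follows from
   [Phi_sq_Gint]. *)
Definition Phi (u : R) : R := / 2 + RInt phi 0 u.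

Lemma sqrt_2PI_gt0 : 0 < sqrt (2 * PI).
Proof. apply sqrt_lt_R0. pose proof PI_RGT_0; lra. Qed.

Lemma sqrt_2PI_sq : sqrt (2 * PI) * sqrt (2 * PI) = 2 * PI.
Proof. apply sqrt_sqrt. pose proof PI_RGT_0; lra. Qed.

Lemma phi_gt0 t : 0 < phi t.
Proof. apply Rdiv_lt_0_compat; [apply exp_pos | apply sqrt_2PI_gt0]. Qed.

Lemma phi_0 : phi 0 = / sqrt (2 * PI).
Proof.
  unfold phi. replace (- 0 ^ 2 / 2) with 0 by field. rewrite exp_0.
  field. pose proof sqrt_2PI_gt0; lra.
Qed.

Lemma phi_le_phi0 t : phi t <= phi 0.
Proof.
  unfold phi, Rdiv. apply Rmult_le_compat_r.
  - left; apply Rinv_0_lt_compat, sqrt_2PI_gt0.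
  - destruct (Req_dec t 0) as [->|Ht]; [lra|].
    left; apply exp_increasing. assert (0 < t ^ 2) by (apply pow2_gt_0; auto). lra.
Qed.

Lemma phi_opp t : phi (- t) = phi t.
Proof. unfold phi. replace ((- t) ^ 2) with (t ^ 2) by ring. reflexivity. Qed.

Lemma phi_mul u v : phi u * phi v = exp (- (u ^ 2 + v ^ 2) / 2) / (2 * PI).
Proof.
  unfold phi. pose proof sqrt_2PI_gt0. pose proof sqrt_2PI_sq.
  set (q := sqrt (2 * PI)) in *. rewrite <- H0.
  replace (- (u ^ 2 + v ^ 2) / 2) with (- u ^ 2 / 2 + - v ^ 2 / 2) by field.
  rewrite exp_plus. field. lra.
Qed.

Lemma is_derive_phi t : is_derive phi t (- t * phi t).
Proof.
  unfold phi. pose proof sqrt_2PI_gt0.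
  auto_derive; [auto|].
  replace (- (t * (t * 1)) * / 2) with (- t ^ 2 / 2) by field. field. lra.
Qed.

Lemma continuous_phi t : continuous phi t.
Proof. exact (continuous_of_is_derive _ _ _ (is_derive_phi t)). Qed.

Lemma is_derive_Phi u : is_derive Phi u (phi u).
Proof.
  unfold Phi. rewrite <- (Rplus_0_l (phi u)).
  apply (is_derive_plus (fun _ => / 2) (RInt phi 0)).
  - apply (is_derive_const (K := R_AbsRing) (V := R_NormedModule)).
  - apply (is_derive_RInt phi (RInt phi 0) 0 u); [|apply continuous_phi].
    apply filter_forall; intros.
    apply (RInt_correct (V := R_CompleteNormedModule)), ex_RInt_continuous_R, continuous_phi.
Qed.

Lemma continuous_Phi u : continuous Phi u.
Proof. exact (continuous_of_is_derive _ _ _ (is_derive_Phi u)). Qed.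

Lemma Phi_0 : Phi 0 = / 2.
Proof. unfold Phi. rewrite RInt_point. unfold zero; simpl. lra. Qed.

Lemma Phi_opp u : Phi (- u) = 1 - Phi u.
Proof.
  assert (H : forall x, is_derive (fun u => Phi (-1 * u + 0) + Phi u) x 0).
  { intros x.
    pose proof (is_derive_plus (fun u => Phi (-1 * u + 0)) Phi x _ _
      (is_derive_comp_affine Phi phi (-1) 0 x is_derive_Phi) (is_derive_Phi x)) as D.
    refine (eq_ind _ (is_derive _ x) D _ _).
    replace (-1 * x + 0) with (- x) by ring. rewrite phi_opp. unfold plus; simpl. ring. }
  pose proof (is_derive_zero_const _ u 0 H) as E. simpl in E.
  replace (-1 * u + 0) with (- u) in E by ring. replace (-1 * 0 + 0) with 0 in E by ring.
  rewrite Phi_0 in E. lra.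
Qed.

Lemma Phi_lt_increasing a b : a < b -> Phi a < Phi b.
Proof.
  intros Hab. destruct (mean_value Phi phi a b Hab is_derive_Phi) as [c [_ Hc]].
  pose proof (phi_gt0 c). nra.
Qed.

Lemma Phi_le_increasing a b : a <= b -> Phi a <= Phi b.
Proof. intros [H|H]; [left; apply Phi_lt_increasing; auto | subst; lra]. Qed.

(* The classical proof that the Gaussian integral is 1: [(Phi t - 1/2)^2 + Gint t / PI] has
   zero derivative, [Gint 0 = atan 1 = PI/4] and [Gint t -> 0]. *)
Definition Gint_integrand (t s : R) : R := exp (- (t ^ 2 * (1 + s ^ 2)) / 2) / (1 + s ^ 2).
Definition Gint_integrand_dt (t s : R) : R := - t * exp (- (t ^ 2 * (1 + s ^ 2)) / 2).
Definition Gint (t : R) : R := RInt (Gint_integrand t) 0 1.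

Lemma one_plus_sq_gt0 s : 0 < 1 + s ^ 2.
Proof. nra. Qed.

Lemma is_derive_Gint_integrand t s :
  is_derive (fun z => Gint_integrand z s) t (Gint_integrand_dt t s).
Proof.
  unfold Gint_integrand, Gint_integrand_dt. pose proof (one_plus_sq_gt0 s).
  auto_derive; [lra|].
  replace (- (t * (t * 1) * (1 + s * (s * 1))) * / 2) with (- (t ^ 2 * (1 + s ^ 2)) / 2) by field.
  field. lra.
Qed.

Lemma continuity_2d_Gint_integrand_dt t s : continuity_2d_pt Gint_integrand_dt t s.
Proof.
  unfold Gint_integrand_dt. apply continuity_2d_pt_mult.
  - apply continuity_2d_pt_opp, continuity_2d_pt_id1.
  - apply (continuity_1d_2d_pt_comp exp (fun u v => - (u ^ 2 * (1 + v ^ 2)) / 2)).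
    { apply derivable_continuous_pt, derivable_pt_exp. }
    apply (continuity_2d_pt_ext (fun u v => - (u * u * (1 + v * v)) * / 2)).
    { intros; simpl; field. }
    apply continuity_2d_pt_mult; [|apply continuity_2d_pt_const].
    apply continuity_2d_pt_opp, continuity_2d_pt_mult.
    + apply continuity_2d_pt_mult; apply continuity_2d_pt_id1.
    + apply continuity_2d_pt_plus; [apply continuity_2d_pt_const|].
      apply continuity_2d_pt_mult; apply continuity_2d_pt_id2.
Qed.

Lemma continuous_Gint_integrand t s : continuous (Gint_integrand t) s.
Proof.
  apply (continuous_of_is_derive _ (Derive (Gint_integrand t) s)), Derive_correct.
  unfold Gint_integrand. pose proof (one_plus_sq_gt0 s). auto_derive. lra.
Qed.

Lemma Gint_integrand_dt_phi t s :
  Gint_integrand_dt t s = - (2 * PI) * phi t * (t * phi (t * s + 0)).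
Proof.
  unfold Gint_integrand_dt.
  replace (- (2 * PI) * phi t * (t * phi (t * s + 0)))
    with (- (2 * PI) * t * (phi t * phi (t * s + 0))) by ring.
  rewrite phi_mul.
  replace (- (t ^ 2 + (t * s + 0) ^ 2) / 2) with (- (t ^ 2 * (1 + s ^ 2)) / 2) by field.
  field. pose proof PI_RGT_0; lra.
Qed.

Lemma is_derive_Gint (t : R) : is_derive Gint t (- (2 * PI) * phi t * (Phi t - Phi 0)).
Proof.
  assert (E : @eq R (- (2 * PI) * phi t * (Phi t - Phi 0))
              (RInt (fun s => Derive (fun u => Gint_integrand u s) t) 0 1)).
  { rewrite (RInt_ext _ (Gint_integrand_dt t)).
    2: { intros; apply is_derive_unique, is_derive_Gint_integrand. }
    rewrite (RInt_primitive (fun s => - (2 * PI) * phi t * Phi (t * s + 0))).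
    - replace (t * 1 + 0) with t by ring. replace (t * 0 + 0) with 0 by ring. ring.
    - intros s. rewrite Gint_integrand_dt_phi.
      apply (is_derive_scal (fun s => Phi (t * s + 0))).
      apply is_derive_comp_affine, is_derive_Phi.
    - intros s. apply (continuous_ext (fun s => - (2 * PI) * phi t * (t * phi (t * s + 0)))).
      { intros; symmetry; apply Gint_integrand_dt_phi. }
      apply (continuous_mult (fun _ => - (2 * PI) * phi t)); [apply continuous_const|].
      apply (continuous_mult (fun _ => t)); [apply continuous_const|].
      apply continuous_comp_affine, continuous_phi. }
  rewrite E. unfold Gint.
  apply (is_derive_RInt_param Gint_integrand 0 1 t).
  - apply filter_forall; intros. eexists; apply is_derive_Gint_integrand.
  - intros. apply (continuity_2d_pt_ext Gint_integrand_dt).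
    { intros; symmetry; apply is_derive_unique, is_derive_Gint_integrand. }
    apply continuity_2d_Gint_integrand_dt.
  - apply filter_forall; intros. apply ex_RInt_continuous_R, continuous_Gint_integrand.
Qed.

Lemma Gint_0 : Gint 0 = PI / 4.
Proof.
  unfold Gint. rewrite (RInt_ext _ (fun s => / (1 + s ^ 2))).
  - rewrite (RInt_primitive atan).
    + rewrite atan_1, atan_0. lra.
    + intros; apply is_derive_Reals, derivable_pt_lim_atan.
    + intros x. apply (continuous_of_is_derive _ (Derive (fun s => / (1 + s ^ 2)) x)), Derive_correct.
      pose proof (one_plus_sq_gt0 x). auto_derive. lra.
  - intros x _. unfold Gint_integrand. replace (- (0 ^ 2 * (1 + x ^ 2)) / 2) with 0 by field.
    rewrite exp_0. apply Rmult_1_l.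
Qed.

Lemma Phi_sq_Gint t : (Phi t - / 2) ^ 2 + Gint t / PI = / 4.
Proof.
  pose proof PI_RGT_0 as Hpi.
  assert (H : forall x, is_derive (fun u => (Phi u - / 2) * (Phi u - / 2) + / PI * Gint u) x 0).
  { intros x.
    assert (D : is_derive (fun u => Phi u - / 2) x (phi x)).
    { rewrite <- (Rminus_0_r (phi x)).
      apply (is_derive_minus Phi (fun _ => / 2)); [apply is_derive_Phi|].
      apply (is_derive_const (K := R_AbsRing) (V := R_NormedModule)). }
    pose proof (is_derive_plus _ _ x _ _
      (is_derive_mult _ _ x _ _ D D (fun a b => Rmult_comm a b))
      (is_derive_scal _ x (/ PI) _ (is_derive_Gint x))) as DD.
    refine (eq_ind _ (is_derive _ x) DD _ _).
    unfold plus, mult; simpl. rewrite Phi_0. field. lra. }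
  pose proof (is_derive_zero_const _ t 0 H) as E. simpl in E.
  rewrite Gint_0, Phi_0 in E.
  replace ((Phi t - / 2) ^ 2 + Gint t / PI) with ((Phi t - / 2) * (Phi t - / 2) + / PI * Gint t)
    by (unfold Rdiv; ring).
  rewrite E. field. lra.
Qed.

Lemma Gint_bounds t : 0 <= Gint t <= exp (- t ^ 2 / 2).
Proof.
  unfold Gint.
  assert (Hex : ex_RInt (Gint_integrand t) 0 1) by apply ex_RInt_continuous_R, continuous_Gint_integrand.
  split.
  - apply RInt_ge_0; [lra | exact Hex |]. intros s _. unfold Gint_integrand.
    left; apply Rdiv_lt_0_compat; [apply exp_pos | apply one_plus_sq_gt0].
  - apply Rle_trans with (RInt (fun _ => exp (- t ^ 2 / 2)) 0 1).
    2: { rewrite RInt_const. unfold scal; simpl; unfold mult; simpl. lra. }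
    apply RInt_le; [lra | exact Hex | apply ex_RInt_const |].
    intros s _. unfold Gint_integrand. pose proof (one_plus_sq_gt0 s).
    assert (exp (- (t ^ 2 * (1 + s ^ 2)) / 2) <= exp (- t ^ 2 / 2)).
    { assert (0 <= t ^ 2 * s ^ 2) by (apply Rmult_le_pos; apply pow2_ge_0).
      destruct (Rle_lt_or_eq_dec (- (t ^ 2 * (1 + s ^ 2)) / 2) (- t ^ 2 / 2)) as [Hl|He]; [lra| |].
      - left; apply exp_increasing, Hl.
      - right; rewrite He; reflexivity. }
    apply Rle_trans with (exp (- (t ^ 2 * (1 + s ^ 2)) / 2)); [|assumption].
    unfold Rdiv at 1. rewrite <- (Rmult_1_r (exp _)) at 2.
    apply Rmult_le_compat_l; [left; apply exp_pos|].
    rewrite <- Rinv_1. apply Rinv_le_contravar; [lra | nra].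
Qed.

Lemma Phi_bounds t : 0 < Phi t < 1.
Proof.
  assert (Hle : forall u, Phi u <= 1).
  { intros u. pose proof (Phi_sq_Gint u). pose proof (Gint_bounds u). pose proof PI_RGT_0.
    assert (0 <= Gint u / PI) by (apply Rdiv_le_0_compat; lra). nra. }
  pose proof (Phi_lt_increasing t (t + 1) ltac:(lra)). pose proof (Hle (t + 1)).
  pose proof (Phi_lt_increasing (- t) (- t + 1) ltac:(lra)). pose proof (Hle (- t + 1)).
  rewrite Phi_opp in *. lra.
Qed.

Lemma Phi_upper_tail t : 0 <= t -> 1 - Phi t <= exp (- t ^ 2 / 2).
Proof.
  intros Ht. pose proof (Phi_sq_Gint t). pose proof (Gint_bounds t).
  pose proof PI_RGT_0. pose proof PI2_1. pose proof (Phi_bounds t).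
  assert (HA : Phi 0 <= Phi t) by (apply Phi_le_increasing; auto). rewrite Phi_0 in HA.
  (* [(1 - Phi t) (Phi t) = Gint t / PI] and [Phi t >= 1/2], [PI > 2]. *)
  assert (H5 : (1 - Phi t) * / 2 <= Gint t / PI) by nra.
  assert (Gint t / PI <= Gint t / 2) by (apply Rmult_le_compat_l; [lra | apply Rinv_le_contravar; lra]).
  lra.
Qed.

Lemma exp_neg_sq_half_small eps : 0 < eps ->
  exists T, forall t, T <= t -> exp (- t ^ 2 / 2) < eps.
Proof.
  intros He. exists (2 / eps + 1). intros t Ht.
  assert (H2 : 0 < 2 / eps) by (apply Rdiv_lt_0_compat; lra).
  (* [exp (-x) <= 1 / (1 + x)] with [x = t^2/2 > 1 / eps] *)
  assert (Hx : / eps < 1 + t ^ 2 / 2).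
  { assert (2 / eps * eps = 2) by (field; lra).
    apply (Rmult_lt_reg_r eps); [lra|]. rewrite Rinv_l by lra. nra. }
  replace (- t ^ 2 / 2) with (- (t ^ 2 / 2)) by field. rewrite exp_Ropp.
  pose proof (exp_ineq1_le (t ^ 2 / 2)).
  rewrite <- (Rinv_inv eps). apply Rinv_lt_contravar.
  - apply Rmult_lt_0_compat; [apply Rinv_0_lt_compat |]; lra.
  - lra.
Qed.

Lemma Phi_upper_tail_small eps : 0 < eps -> exists T, forall t, T <= t -> 1 - Phi t < eps.
Proof.
  intros He. destruct (exp_neg_sq_half_small eps He) as [T HT].
  exists (Rmax T 0). intros t Ht.
  apply Rle_lt_trans with (exp (- t ^ 2 / 2)).
  - apply Phi_upper_tail. pose proof (Rmax_r T 0); lra.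
  - apply HT. pose proof (Rmax_l T 0); lra.
Qed.

Lemma Phi_upper_tails_small a1 a2 c eps : 0 < a1 -> 0 < a2 -> 0 < eps ->
  exists M, 0 < M /\ 1 - Phi (a1 * M) < eps /\ 1 - Phi (a2 * M - c) < eps.
Proof.
  intros H1 H2 He. destruct (Phi_upper_tail_small eps He) as [T HT].
  set (L := Rabs T + Rabs c + 1). pose proof (Rle_abs T). pose proof (Rle_abs c).
  assert (HL : 0 < L /\ T <= L /\ T <= L - c)
    by (unfold L; pose proof (Rabs_pos T); pose proof (Rabs_pos c); lra).
  exists (L / a1 + L / a2).
  assert (0 < L / a1) by (apply Rdiv_lt_0_compat; lra). assert (0 < L / a2) by (apply Rdiv_lt_0_compat; lra).
  repeat split; [lra | apply HT | apply HT].
  - replace (a1 * (L / a1 + L / a2)) with (L + a1 * (L / a2)) by (field; lra).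
    assert (0 < a1 * (L / a2)) by (apply Rmult_lt_0_compat; lra). lra.
  - replace (a2 * (L / a1 + L / a2) - c) with (L + a2 * (L / a1) - c) by (field; lra).
    assert (0 < a2 * (L / a1)) by (apply Rmult_lt_0_compat; lra). lra.
Qed.

(** * The inequality behind the theorem *)

Definition gap (u : R) : R := sqrt (2 * PI) / 4 * (2 * Phi u - 1) - u * (1 - Phi u).
Definition dgap (u : R) : R := phi u * (sqrt (2 * PI) / 2 + u) - (1 - Phi u).

Lemma is_derive_gap (u : R) : is_derive gap u (dgap u).
Proof.
  unfold gap, dgap.
  assert (DQ : is_derive (fun u => 1 - Phi u) u (- phi u)).
  { rewrite <- Rminus_0_l. apply (is_derive_minus (fun _ => 1) Phi); [|apply is_derive_Phi].
    apply (is_derive_const (K := R_AbsRing) (V := R_NormedModule)). }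
  assert (DP : is_derive (fun u => 2 * Phi u - 1) u (2 * phi u)).
  { rewrite <- (Rminus_0_r (2 * phi u)).
    apply (is_derive_minus (fun u => 2 * Phi u) (fun _ => 1)).
    - apply (is_derive_scal Phi), is_derive_Phi.
    - apply (is_derive_const (K := R_AbsRing) (V := R_NormedModule)). }
  pose proof (is_derive_minus _ _ u _ _
    (is_derive_scal _ u (sqrt (2 * PI) / 4) _ DP)
    (is_derive_mult (fun u => u) _ u _ _ (is_derive_id u) DQ (fun a b => Rmult_comm a b))) as D.
  refine (eq_ind _ (is_derive _ u) D _ _).
  unfold minus, plus, opp, mult, scal, one; simpl. field.
Qed.

Lemma is_derive_dgap (u : R) : is_derive dgap u (phi u * (2 - u * (sqrt (2 * PI) / 2 + u))).
Proof.
  unfold dgap.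
  assert (DQ : is_derive (fun u => 1 - Phi u) u (- phi u)).
  { rewrite <- Rminus_0_l. apply (is_derive_minus (fun _ => 1) Phi); [|apply is_derive_Phi].
    apply (is_derive_const (K := R_AbsRing) (V := R_NormedModule)). }
  assert (DL : is_derive (fun u => sqrt (2 * PI) / 2 + u) u 1) by (auto_derive; auto).
  pose proof (is_derive_minus _ _ u _ _
    (is_derive_mult phi _ u _ _ (is_derive_phi u) DL (fun a b => Rmult_comm a b)) DQ) as D.
  refine (eq_ind _ (is_derive _ u) D _ _).
  unfold minus, plus, opp, mult; simpl. ring.
Qed.

Lemma dgap_0 : dgap 0 = 0.
Proof. unfold dgap. rewrite phi_0, Phi_0. field. pose proof sqrt_2PI_gt0; lra. Qed.

Lemma dgap_lower v : 0 <= v -> - exp (- v ^ 2 / 2) <= dgap v.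
Proof.
  intros Hv. unfold dgap. pose proof (Phi_upper_tail v Hv). pose proof (phi_gt0 v).
  pose proof sqrt_2PI_gt0.
  assert (0 <= phi v * (sqrt (2 * PI) / 2 + v)) by (apply Rmult_le_pos; lra). lra.
Qed.

(* [dgap] rises from 0 while [u (sqrt(2 PI)/2 + u) < 2], then decreases towards its limit 0. *)
Lemma dgap_gt0 u : 0 < u -> 0 < dgap u.
Proof.
  intros Hu. set (a0 := sqrt (2 * PI) / 2). assert (Ha0 : 0 < a0) by (pose proof sqrt_2PI_gt0; unfold a0; lra).
  destruct (Rle_lt_dec (u * (a0 + u)) 2) as [Hs|Hs].
  - destruct (mean_value dgap _ 0 u Hu is_derive_dgap) as [c [Hc E]]. rewrite dgap_0 in E.
    pose proof (phi_gt0 c). fold a0 in E.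
    assert (c * (a0 + c) < u * (a0 + u)) by nra.
    assert (0 < phi c * (2 - c * (a0 + c))) by (apply Rmult_lt_0_compat; lra).
    nra.
  - assert (Hdec : forall v w, u <= v -> v < w -> dgap w < dgap v).
    { intros v w Hv Hw. destruct (mean_value dgap _ v w Hw is_derive_dgap) as [c [Hc E]].
      pose proof (phi_gt0 c). fold a0 in E.
      assert (c * (a0 + c) > u * (a0 + u)) by nra.
      assert (0 < phi c * (c * (a0 + c) - 2)) by (apply Rmult_lt_0_compat; lra).
      nra. }
    assert (H1 : 0 <= dgap (u + 1)).
    { destruct (Rle_lt_dec 0 (dgap (u + 1))) as [|Hn]; auto.
      destruct (exp_neg_sq_half_small (- dgap (u + 1))) as [T HT]; [lra|].
      set (v := Rmax T (u + 2)). pose proof (Rmax_l T (u + 2)). pose proof (Rmax_r T (u + 2)).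
      pose proof (HT v ltac:(unfold v; lra)). pose proof (dgap_lower v ltac:(unfold v; lra)).
      pose proof (Hdec (u + 1) v ltac:(lra) ltac:(unfold v; lra)). lra. }
    pose proof (Hdec u (u + 1) ltac:(lra) ltac:(lra)). lra.
Qed.

Lemma gap_gt0 u : 0 < u -> 0 < gap u.
Proof.
  intros Hu. destruct (mean_value gap dgap 0 u Hu is_derive_gap) as [c [Hc E]].
  replace (gap 0) with 0 in E by (unfold gap; rewrite Phi_0; field).
  pose proof (dgap_gt0 c ltac:(lra)). nra.
Qed.

(** * Improper integrals over the real line *)

Lemma RiemannInt_of_is_RInt (f : R -> R) a b v : is_RInt f a b v ->
  exists pr : Riemann_integrable f a b, RiemannInt pr = v.
Proof.
  intros H. assert (E : ex_RInt f a b) by (exists v; auto).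
  exists (ex_RInt_Reals_0 f a b E). rewrite <- RInt_Reals. apply is_RInt_unique; auto.
Qed.

Lemma is_int_R_unique f l1 l2 : is_int_R f l1 -> is_int_R f l2 -> l1 = l2.
Proof.
  intros H1 H2. apply Rminus_diag_uniq, Rabs_eq_0, Rle_antisym; [|apply Rabs_pos].
  apply Rnot_lt_le. intros Hlt. set (e := Rabs (l1 - l2) / 2).
  destruct (H1 e ltac:(unfold e; lra)) as [M1 HM1].
  destruct (H2 e ltac:(unfold e; lra)) as [M2 HM2].
  set (M := Rmax (Rabs M1) (Rabs M2)).
  pose proof (Rmax_l (Rabs M1) (Rabs M2)). pose proof (Rmax_r (Rabs M1) (Rabs M2)).
  pose proof (Rle_abs M1). pose proof (Rle_abs M2).
  destruct (HM1 (- M) M ltac:(unfold M in *; lra) ltac:(unfold M in *; lra)) as [p1 Hp1].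
  destruct (HM2 (- M) M ltac:(unfold M in *; lra) ltac:(unfold M in *; lra)) as [p2 Hp2].
  rewrite (RiemannInt_P5 p2 p1) in Hp2.
  pose proof (Rabs_triang (RiemannInt p1 - l2) (- (RiemannInt p1 - l1))) as Ht.
  rewrite Rabs_Ropp in Ht. replace (RiemannInt p1 - l2 + - (RiemannInt p1 - l1)) with (l1 - l2) in Ht by ring.
  unfold e in *. lra.
Qed.

Lemma is_int_R_ext f g l : (forall x, f x = g x) -> is_int_R f l -> is_int_R g l.
Proof. intros E H. replace g with f; [exact H | apply functional_extensionality, E]. Qed.

Lemma is_int_R_piecewise (f g1 g2 G1 G2 : R -> R) p (l1 l2 : R) :
  (forall x, is_derive G1 x (g1 x)) -> (forall x, continuous g1 x) ->
  (forall x, is_derive G2 x (g2 x)) -> (forall x, continuous g2 x) ->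
  (forall x, x < p -> f x = g1 x) -> (forall x, p < x -> f x = g2 x) ->
  is_lim G1 m_infty l1 -> is_lim G2 p_infty l2 ->
  is_int_R f ((G1 p - l1) + (l2 - G2 p)).
Proof.
  intros D1 C1 D2 C2 E1 E2 L1 L2 eps He.
  apply is_lim_spec in L1, L2.
  destruct (L1 (mkposreal (eps / 2) ltac:(lra))) as [M1 HM1].
  destruct (L2 (mkposreal (eps / 2) ltac:(lra))) as [M2 HM2]. simpl in HM1, HM2.
  exists (Rabs M1 + Rabs M2 + Rabs p + 1). intros a b Ha Hb.
  pose proof (Rle_abs M1). pose proof (Rle_abs (- M1)). pose proof (Rle_abs M2).
  pose proof (Rle_abs p). pose proof (Rle_abs (- p)). rewrite Rabs_Ropp in *.
  pose proof (Rabs_pos M1). pose proof (Rabs_pos M2).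
  assert (I1 : is_RInt f a p (G1 p - G1 a)).
  { apply (is_RInt_ext g1); [|apply is_RInt_primitive; auto].
    intros x Hx. rewrite Rmin_left, Rmax_right in Hx by lra. symmetry; apply E1; lra. }
  assert (I2 : is_RInt f p b (G2 b - G2 p)).
  { apply (is_RInt_ext g2); [|apply is_RInt_primitive; auto].
    intros x Hx. rewrite Rmin_left, Rmax_right in Hx by lra. symmetry; apply E2; lra. }
  destruct (RiemannInt_of_is_RInt _ _ _ _ (is_RInt_Chasles f a p b _ _ I1 I2)) as [pr Hpr].
  exists pr. rewrite Hpr. unfold plus; simpl.
  assert (A1 : Rabs (G1 a - l1) < eps / 2) by (apply HM1; lra).
  assert (A2 : Rabs (G2 b - l2) < eps / 2) by (apply HM2; lra).
  apply Rabs_def2 in A1, A2. apply Rabs_def1; lra.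
Qed.

Lemma is_prob_unique sx sy rho ind l1 l2 :
  is_prob sx sy rho ind l1 -> is_prob sx sy rho ind l2 -> l1 = l2.
Proof.
  intros [g1 [Hg1 H1]] [g2 [Hg2 H2]].
  assert (g1 = g2) as -> by (apply functional_extensionality; intros x; eapply is_int_R_unique; eauto).
  eapply is_int_R_unique; eauto.
Qed.

Lemma prob_of_is_prob sx sy rho ind l : is_prob sx sy rho ind l -> prob sx sy rho ind = l.
Proof.
  intros H. eapply is_prob_unique; [|exact H].
  exact (epsilon_spec (inhabits 0) (is_prob sx sy rho ind) (ex_intro _ l H)).
Qed.

Lemma Rbar_affine_p_infty (a b : R) : 0 < a -> Rbar_plus (Rbar_mult a p_infty) b = p_infty.
Proof.
  intros Ha. unfold Rbar_mult, Rbar_mult'. destruct (Rle_dec 0 a) as [H|H]; [|lra].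
  destruct (Rle_lt_or_eq_dec 0 a H); [reflexivity | lra].
Qed.

Lemma Rbar_affine_m_infty (a b : R) : 0 < a -> Rbar_plus (Rbar_mult a m_infty) b = m_infty.
Proof.
  intros Ha. unfold Rbar_mult, Rbar_mult'. destruct (Rle_dec 0 a) as [H|H]; [|lra].
  destruct (Rle_lt_or_eq_dec 0 a H); [reflexivity | lra].
Qed.

Lemma is_lim_Phi_p_infty : is_lim Phi p_infty 1.
Proof.
  apply is_lim_spec. intros eps. destruct (Phi_upper_tail_small eps (cond_pos eps)) as [T HT].
  exists T. intros t Ht. pose proof (Phi_bounds t). rewrite Rabs_left1; [|lra].
  pose proof (HT t ltac:(lra)). lra.
Qed.

Lemma is_lim_Phi_m_infty : is_lim Phi m_infty 0.
Proof.
  apply is_lim_spec. intros eps. destruct (Phi_upper_tail_small eps (cond_pos eps)) as [T HT].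
  exists (- T). intros t Ht. pose proof (Phi_bounds t). rewrite Rabs_right; [|lra].
  pose proof (HT (- t) ltac:(lra)). rewrite Phi_opp in *. lra.
Qed.

Lemma is_lim_Phi_affine_p_infty a b : 0 < a -> is_lim (fun y => Phi (a * y + b)) p_infty 1.
Proof.
  intros Ha. apply is_lim_comp_lin; [|lra].
  rewrite Rbar_affine_p_infty; auto. apply is_lim_Phi_p_infty.
Qed.

Lemma is_lim_Phi_affine_m_infty a b : 0 < a -> is_lim (fun y => Phi (a * y + b)) m_infty 0.
Proof.
  intros Ha. apply is_lim_comp_lin; [|lra].
  rewrite Rbar_affine_m_infty; auto. apply is_lim_Phi_m_infty.
Qed.

(** * Normal densities *)

Definition normal_pdf (sx x : R) : R := phi (x / sx) / sx.

Section NormalPdf.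

Variable sx : R.
Hypothesis hsx : 0 < sx.

Lemma is_derive_Phi_div (x : R) : is_derive (fun y => Phi (y / sx)) x (normal_pdf sx x).
Proof.
  apply (is_derive_ext (fun y => Phi (/ sx * y + 0))); [intros; f_equal; field; lra|].
  unfold normal_pdf. replace (x / sx) with (/ sx * x + 0) by (field; lra).
  replace (phi (/ sx * x + 0) / sx) with (/ sx * phi (/ sx * x + 0)) by (field; lra).
  apply is_derive_comp_affine, is_derive_Phi.
Qed.

Lemma continuous_normal_pdf x : continuous (normal_pdf sx) x.
Proof.
  apply (continuous_ext (fun y => / sx * phi (/ sx * y + 0))).
  { intros y. unfold normal_pdf. replace (/ sx * y + 0) with (y / sx) by (field; lra).
    unfold Rdiv; apply Rmult_comm. }
  apply (continuous_mult (fun _ => / sx)); [apply continuous_const|].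
  apply continuous_comp_affine, continuous_phi.
Qed.

Lemma normal_pdf_gt0 x : 0 < normal_pdf sx x.
Proof. apply Rdiv_lt_0_compat; [apply phi_gt0 | exact hsx]. Qed.

Lemma normal_pdf_opp x : normal_pdf sx (- x) = normal_pdf sx x.
Proof. unfold normal_pdf. replace (- x / sx) with (- (x / sx)) by (field; lra). rewrite phi_opp; auto. Qed.

Lemma RInt_normal_pdf a b : RInt (normal_pdf sx) a b = Phi (b / sx) - Phi (a / sx).
Proof. apply (RInt_primitive (fun y => Phi (y / sx))); [apply is_derive_Phi_div | apply continuous_normal_pdf]. Qed.

Lemma continuous_normal_pdf_mul_affine (f : R -> R) al be x : (forall y, continuous f y) ->
  continuous (fun x => normal_pdf sx x * f (al * x + be)) x.
Proof.
  intros Hf. apply (continuous_mult (normal_pdf sx)); [apply continuous_normal_pdf|].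
  apply continuous_comp_affine, Hf.
Qed.

(** ** Mixing a normal variable into [Phi]: [E Phi(al X + be) = Phi (be / sqrt (1 + al^2 sx^2))] *)

Definition mix_sd (al : R) : R := sqrt (1 + al ^ 2 * sx ^ 2).

Lemma mix_sd_sq al : mix_sd al * mix_sd al = 1 + al ^ 2 * sx ^ 2.
Proof. apply sqrt_sqrt. assert (0 <= al ^ 2 * sx ^ 2) by (apply Rmult_le_pos; apply pow2_ge_0). lra. Qed.

Lemma mix_sd_gt0 al : 0 < mix_sd al.
Proof. apply sqrt_lt_R0. assert (0 <= al ^ 2 * sx ^ 2) by (apply Rmult_le_pos; apply pow2_ge_0). lra. Qed.

(* Completing the square in the exponent. *)
Lemma normal_pdf_mul_phi_affine al be x :
  normal_pdf sx x * phi (al * x + be) =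
  phi (be / mix_sd al) / sx * phi (mix_sd al / sx * x + al * be * sx / mix_sd al).
Proof.
  unfold normal_pdf. pose proof (mix_sd_gt0 al). pose proof (mix_sd_sq al).
  set (s := mix_sd al) in *.
  replace (phi (x / sx) / sx * phi (al * x + be)) with (phi (x / sx) * phi (al * x + be) / sx)
    by (field; lra).
  replace (phi (be / s) / sx * phi (s / sx * x + al * be * sx / s))
    with (phi (be / s) * phi (s / sx * x + al * be * sx / s) / sx) by (field; lra).
  rewrite !phi_mul. do 4 f_equal.
  assert (Hs2 : s ^ 2 = 1 + al ^ 2 * sx ^ 2) by (rewrite <- H0; ring).
  replace ((be / s) ^ 2 + (s / sx * x + al * be * sx / s) ^ 2) with
    (be ^ 2 * (1 + al ^ 2 * sx ^ 2) / s ^ 2 + s ^ 2 * x ^ 2 / sx ^ 2 + 2 * al * be * x)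
    by (field; lra).
  rewrite Hs2. assert (0 <= al ^ 2 * sx ^ 2) by (apply Rmult_le_pos; apply pow2_ge_0).
  field; repeat split; lra.
Qed.

Lemma RInt_normal_pdf_phi_affine al be a b :
  RInt (fun x => normal_pdf sx x * phi (al * x + be)) a b =
  phi (be / mix_sd al) / mix_sd al *
   (Phi (mix_sd al / sx * b + al * be * sx / mix_sd al)
    - Phi (mix_sd al / sx * a + al * be * sx / mix_sd al)).
Proof.
  pose proof (mix_sd_gt0 al). set (s := mix_sd al) in *.
  rewrite (RInt_primitive (fun x => phi (be / s) / s * Phi (s / sx * x + al * be * sx / s))).
  - symmetry; apply Rmult_minus_distr_l.
  - intros x. rewrite normal_pdf_mul_phi_affine. fold s.
    replace (phi (be / s) / sx * phi (s / sx * x + al * be * sx / s))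
      with (phi (be / s) / s * (s / sx * phi (s / sx * x + al * be * sx / s))) by (field; lra).
    apply (is_derive_scal (fun x => Phi (s / sx * x + al * be * sx / s))).
    apply is_derive_comp_affine, is_derive_Phi.
  - intros; apply continuous_normal_pdf_mul_affine, continuous_phi.
Qed.

Definition trunc_mix (al N be : R) : R :=
  RInt (fun x => normal_pdf sx x * Phi (al * x + be)) (- N) N.

Lemma ex_RInt_normal_pdf_Phi_affine al be a b :
  ex_RInt (fun x => normal_pdf sx x * Phi (al * x + be)) a b.
Proof. apply ex_RInt_continuous_R; intros; apply continuous_normal_pdf_mul_affine, continuous_Phi. Qed.

Lemma is_derive_trunc_mix al N (be : R) :
  is_derive (trunc_mix al N) be (RInt (fun x => normal_pdf sx x * phi (al * x + be)) (- N) N).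
Proof.
  assert (D : forall t u : R,
    is_derive (fun u => normal_pdf sx t * Phi (al * t + u)) u (normal_pdf sx t * phi (al * t + u))).
  { intros t u. apply (is_derive_scal (fun u => Phi (al * t + u))).
    apply (is_derive_ext (fun u => Phi (1 * u + al * t))); [intros; f_equal; ring|].
    replace (phi (al * t + u)) with (1 * phi (1 * u + al * t)) by (rewrite Rmult_1_l; f_equal; ring).
    apply is_derive_comp_affine, is_derive_Phi. }
  unfold trunc_mix.
  rewrite (RInt_ext _ (fun x => Derive (fun u => normal_pdf sx x * Phi (al * x + u)) be))
    by (intros; symmetry; apply is_derive_unique, D).
  apply (is_derive_RInt_param (fun u x => normal_pdf sx x * Phi (al * x + u)) (- N) N be).
  - apply filter_forall. intros. eexists. apply D.
  - intros. apply (continuity_2d_pt_ext (fun u v => normal_pdf sx v * phi (al * v + u))).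
    { intros; symmetry; apply is_derive_unique, D. }
    apply continuity_2d_pt_mult.
    + apply (continuity_1d_2d_pt_comp (normal_pdf sx) (fun u v => v)); [|apply continuity_2d_pt_id2].
      apply continuity_pt_filterlim, continuous_normal_pdf.
    + apply (continuity_1d_2d_pt_comp phi (fun u v => al * v + u)).
      { apply continuity_pt_filterlim, continuous_phi. }
      apply continuity_2d_pt_plus; [|apply continuity_2d_pt_id1].
      apply continuity_2d_pt_mult; [apply continuity_2d_pt_const | apply continuity_2d_pt_id2].
  - apply filter_forall. intros. apply ex_RInt_normal_pdf_Phi_affine.
Qed.

(* [x -> -x] turns [Phi (al x)] into [1 - Phi (al x)]. *)
Lemma trunc_mix_0 al N : trunc_mix al N 0 = Phi (N / sx) - / 2.
Proof.
  set (g := fun x => normal_pdf sx x * Phi (al * x + 0)).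
  assert (Hg : ex_RInt g (- N) N) by apply ex_RInt_normal_pdf_Phi_affine.
  assert (Hr : is_RInt (fun y => opp (g (- y))) N (- N) (trunc_mix al N 0)).
  { apply (is_RInt_comp_opp g N (- N)). rewrite Ropp_involutive. apply (RInt_correct (V := R_CompleteNormedModule)), Hg. }
  apply is_RInt_swap in Hr.
  assert (Hsym : is_RInt (fun y => normal_pdf sx y - g y) (- N) N (opp (opp (trunc_mix al N 0)))).
  { apply is_RInt_opp in Hr. revert Hr. apply is_RInt_ext. intros y _.
    rewrite opp_opp. unfold g. rewrite normal_pdf_opp. replace (al * - y + 0) with (- (al * y + 0)) by ring.
    rewrite Phi_opp, Rmult_minus_distr_l, Rmult_1_r. reflexivity. }
  apply (is_RInt_unique (V := R_CompleteNormedModule)) in Hsym. rewrite opp_opp in Hsym.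
  rewrite (RInt_minus (normal_pdf sx) g) in Hsym; [|apply ex_RInt_continuous_R, continuous_normal_pdf | exact Hg].
  rewrite RInt_normal_pdf in Hsym. change (minus ?a ?b) with (a - b) in Hsym.
  replace (- N / sx) with (- (N / sx)) in Hsym by (field; lra). rewrite Phi_opp in Hsym.
  change (trunc_mix al N 0) with (RInt g (- N) N) in *. lra.
Qed.

Lemma is_derive_trunc_mix_sub_Phi al N (b : R) :
  is_derive (fun b => trunc_mix al N b - Phi (b / mix_sd al)) b
    (phi (b / mix_sd al) / mix_sd al *
     (Phi (mix_sd al / sx * N + al * sx / mix_sd al * b)
      - Phi (mix_sd al / sx * (- N) + al * sx / mix_sd al * b) - 1)).
Proof.
  pose proof (mix_sd_gt0 al) as Hs. set (s := mix_sd al) in *.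
  replace (phi (b / s) / s * _)
    with (RInt (fun x => normal_pdf sx x * phi (al * x + b)) (- N) N - / s * phi (/ s * b + 0)).
  - apply (is_derive_ext (fun b => trunc_mix al N b - Phi (/ s * b + 0))).
    { intros; do 2 f_equal; field; lra. }
    exact (is_derive_minus _ _ b _ _ (is_derive_trunc_mix al N b)
             (is_derive_comp_affine Phi phi (/ s) 0 b is_derive_Phi)).
  - rewrite RInt_normal_pdf_phi_affine. fold s.
    replace (/ s * b + 0) with (b / s) by (field; lra).
    replace (al * b * sx / s) with (al * sx / s * b) by (field; lra). unfold Rdiv. ring.
Qed.

Lemma trunc_mix_error al N be : 0 <= N ->
  Rabs (trunc_mix al N be - Phi (be / mix_sd al)) <=
  (1 - Phi (N / sx)) + Rabs be * (2 * phi 0 / mix_sd al) *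
     (1 - Phi (mix_sd al / sx * N - Rabs (al * sx / mix_sd al) * Rabs be)).
Proof.
  intros HN. pose proof (mix_sd_gt0 al) as Hs. set (s := mix_sd al) in *.
  set (k0 := al * sx / s). set (W := s / sx * N - Rabs k0 * Rabs be).
  set (E := fun b => trunc_mix al N b - Phi (b / s)).
  set (E' := fun b => phi (b / s) / s * (Phi (s / sx * N + k0 * b) - Phi (s / sx * (- N) + k0 * b) - 1)).
  assert (HD : forall b, is_derive E b (E' b)) by (intros b; exact (is_derive_trunc_mix_sub_Phi al N b)).
  assert (HB : forall c, Rmin 0 be <= c <= Rmax 0 be -> Rabs (E' c) <= 2 * phi 0 / s * (1 - Phi W)).
  { intros c Hc. unfold E'.
    assert (Hk : Rabs (k0 * c) <= Rabs k0 * Rabs be).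
    { rewrite Rabs_mult. apply Rmult_le_compat_l; [apply Rabs_pos|].
      unfold Rmin, Rmax in Hc. destruct (Rle_dec 0 be); unfold Rabs;
        destruct (Rcase_abs c), (Rcase_abs be); lra. }
    pose proof (Rle_abs (k0 * c)). pose proof (Rle_abs (- (k0 * c))). rewrite Rabs_Ropp in *.
    assert (H1 : Phi W <= Phi (s / sx * N + k0 * c)) by (apply Phi_le_increasing; unfold W; lra).
    replace (s / sx * - N) with (- (s / sx * N)) by ring.
    assert (H2 : Phi (- (s / sx * N) + k0 * c) <= Phi (- W)) by (apply Phi_le_increasing; unfold W; lra).
    rewrite Phi_opp in H2.
    pose proof (Phi_bounds (s / sx * N + k0 * c)). pose proof (Phi_bounds (- (s / sx * N) + k0 * c)).
    pose proof (phi_le_phi0 (c / s)). pose proof (phi_gt0 (c / s)). pose proof (phi_gt0 0).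
    assert (Hp : 0 < phi (c / s) / s) by (apply Rdiv_lt_0_compat; lra).
    rewrite Rabs_mult, (Rabs_left1 (Phi _ - Phi _ - 1)), (Rabs_right (phi (c / s) / s)) by lra.
    assert (Hq : phi (c / s) / s <= phi 0 / s) by (apply Rmult_le_compat_r; [left; apply Rinv_0_lt_compat|]; lra).
    replace (2 * phi 0 / s * (1 - Phi W)) with (phi 0 / s * (2 * (1 - Phi W))) by (field; lra).
    apply Rmult_le_compat; lra. }
  assert (E0 : E 0 = Phi (N / sx) - 1).
  { unfold E. rewrite trunc_mix_0. replace (0 / s) with 0 by (field; lra). rewrite Phi_0. lra. }
  pose proof (mean_value_abs_bound E E' 0 be _ HD HB) as HM.
  rewrite E0, Rminus_0_r in HM. unfold E in HM. fold s k0 W.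
  pose proof (Phi_bounds (N / sx)).
  pose proof (Rabs_triang (trunc_mix al N be - Phi (be / s) - (Phi (N / sx) - 1)) (Phi (N / sx) - 1)) as Ht.
  rewrite (Rabs_left1 (Phi (N / sx) - 1)) in Ht by lra.
  replace (trunc_mix al N be - Phi (be / s) - (Phi (N / sx) - 1) + (Phi (N / sx) - 1))
    with (trunc_mix al N be - Phi (be / s)) in Ht by ring.
  lra.
Qed.

Lemma RInt_normal_pdf_Phi_affine_bounds al be c d : c <= d ->
  0 <= RInt (fun x => normal_pdf sx x * Phi (al * x + be)) c d <= Phi (d / sx) - Phi (c / sx).
Proof.
  intros Hcd.
  assert (Hg : forall x, 0 <= normal_pdf sx x * Phi (al * x + be) <= normal_pdf sx x).
  { intros. pose proof (normal_pdf_gt0 x). pose proof (Phi_bounds (al * x + be)). nra. }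
  split.
  - apply RInt_ge_0; [exact Hcd | apply ex_RInt_normal_pdf_Phi_affine |]. intros; apply Hg.
  - rewrite <- RInt_normal_pdf. apply RInt_le; [exact Hcd | apply ex_RInt_normal_pdf_Phi_affine | |].
    + apply ex_RInt_continuous_R, continuous_normal_pdf.
    + intros; apply Hg.
Qed.

Lemma is_int_R_normal_pdf_Phi_affine al be :
  is_int_R (fun x => normal_pdf sx x * Phi (al * x + be)) (Phi (be / mix_sd al)).
Proof.
  intros eps He. pose proof (mix_sd_gt0 al) as Hs.
  set (s := mix_sd al) in *. set (g := fun x => normal_pdf sx x * Phi (al * x + be)).
  set (k0 := al * sx / s). set (C0 := Rabs be * (2 * phi 0 / s)).
  assert (HC0 : 0 <= C0).
  { apply Rmult_le_pos; [apply Rabs_pos|]. pose proof (phi_gt0 0). apply Rlt_le, Rdiv_lt_0_compat; lra. }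
  set (e' := eps / (4 * (C0 + 1))).
  assert (He' : 0 < e') by (apply Rdiv_lt_0_compat; lra).
  pose proof (Rabs_pos k0). pose proof (Rabs_pos be).
  destruct (Phi_upper_tails_small (/ sx) (s / sx) (Rabs k0 * Rabs be) e')
    as [M [HM0 [Q1 Q2]]]; [apply Rinv_0_lt_compat; lra | apply Rdiv_lt_0_compat; lra | exact He' |].
  replace (/ sx * M) with (M / sx) in Q1 by (field; lra).
  (* Both tails and the error of [trunc_mix] are at most [e'] times a constant. *)
  pose proof (trunc_mix_error al M be ltac:(lra)) as HB. fold s k0 C0 in HB.
  exists M. intros a b Ha Hb.
  assert (EI : forall c d, ex_RInt g c d) by (intros; apply ex_RInt_normal_pdf_Phi_affine).
  assert (HR : RInt g a b = RInt g a (- M) + trunc_mix al M be + RInt g M b).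
  { unfold trunc_mix. fold g. rewrite <- (RInt_Chasles g a M b), <- (RInt_Chasles g a (- M) M) by auto.
    unfold plus; simpl. ring. }
  pose proof (RInt_normal_pdf_Phi_affine_bounds al be M b ltac:(lra)) as T1.
  pose proof (RInt_normal_pdf_Phi_affine_bounds al be a (- M) ltac:(lra)) as T2. fold g in T1, T2.
  pose proof (Phi_bounds (b / sx)). pose proof (Phi_bounds (a / sx)). pose proof (Phi_bounds (s / sx * M - Rabs k0 * Rabs be)).
  replace (- M / sx) with (- (M / sx)) in T2 by (field; lra). rewrite Phi_opp in T2.
  assert (Hsum : Rabs (RInt g a b - Phi (be / s)) < eps).
  { rewrite HR.
    replace (RInt g a (- M) + trunc_mix al M be + RInt g M b - Phi (be / s)) with
      (RInt g a (- M) + RInt g M b + (trunc_mix al M be - Phi (be / s))) by ring.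
    eapply Rle_lt_trans; [apply Rabs_triang|]. rewrite Rabs_right by lra.
    assert (C0 * (1 - Phi (s / sx * M - Rabs k0 * Rabs be)) <= C0 * e') by (apply Rmult_le_compat_l; lra).
    assert (e' * (3 + C0) < eps).
    { apply (Rmult_lt_reg_r (4 * (C0 + 1))); [lra|]. unfold e'.
      replace (eps / (4 * (C0 + 1)) * (3 + C0) * (4 * (C0 + 1))) with (eps * (3 + C0)) by (field; lra).
      nra. }
    nra. }
  destruct (RiemannInt_of_is_RInt g a b _ (RInt_correct (V := R_CompleteNormedModule) g a b (EI a b)))
    as [pr Hpr].
  exists pr. rewrite Hpr. exact Hsum.
Qed.
End NormalPdf.

(** * Half-planes under the bivariate normal law *)

Definition ind_halfplane (C S m x y : R) : R := if Rlt_dec m (C * x + S * y) then 1 else 0.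

Section Bivariate.

Variables sx sy rho : R.
Hypotheses (hsx : 0 < sx) (hsy : 0 < sy) (hrho : -1 < rho < 1).

(* Given [xi = x], [eta] is normal with mean [cond_mean x] and deviation [cond_sd]. *)
Definition cond_sd : R := sy * sqrt (1 - rho ^ 2).
Definition cond_mean (x : R) : R := rho * sy / sx * x.
Definition cond_cdf (x y : R) : R := normal_pdf sx x * Phi (/ cond_sd * y + - (cond_mean x / cond_sd)).

(* The standard deviation of [C xi + S eta]. *)
Definition lin_sd (C S : R) : R := sqrt (C ^ 2 * sx ^ 2 + 2 * rho * sx * sy * C * S + S ^ 2 * sy ^ 2).

Lemma sqrt_1_rho2_sq : sqrt (1 - rho ^ 2) ^ 2 = 1 - rho ^ 2.
Proof. rewrite <- Rsqr_pow2. apply Rsqr_sqrt. nra. Qed.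

Lemma cond_sd_gt0 : 0 < cond_sd.
Proof. apply Rmult_lt_0_compat; [exact hsy | apply sqrt_lt_R0; nra]. Qed.

Lemma binorm_density_cond x y :
  binorm_density sx sy rho x y =
  normal_pdf sx x * (/ cond_sd * phi (/ cond_sd * y + - (cond_mean x / cond_sd))).
Proof.
  unfold binorm_density, normal_pdf, cond_sd, cond_mean.
  assert (Hr1 : 0 < sqrt (1 - rho ^ 2)) by (apply sqrt_lt_R0; nra).
  pose proof sqrt_1_rho2_sq as Hr1s. set (r1 := sqrt (1 - rho ^ 2)) in *.
  set (z := / (sy * r1) * y + - (rho * sy / sx * x / (sy * r1))).
  replace (phi (x / sx) / sx * (/ (sy * r1) * phi z)) with (phi (x / sx) * phi z / (sx * sy * r1))
    by (field; repeat split; lra).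
  rewrite phi_mul.
  assert (Ez : z ^ 2 = (y - rho * sy / sx * x) ^ 2 / (sy ^ 2 * r1 ^ 2)) by (unfold z; field; repeat split; lra).
  assert (EX : - / (2 * (1 - rho ^ 2)) * (x ^ 2 / sx ^ 2 - 2 * rho * x * y / (sx * sy) + y ^ 2 / sy ^ 2) =
               - ((x / sx) ^ 2 + z ^ 2) / 2).
  { rewrite Ez, Hr1s. field. repeat split; nra. }
  rewrite EX. pose proof PI_RGT_0. field. repeat split; lra.
Qed.

Lemma is_derive_cond_cdf x (y : R) : is_derive (cond_cdf x) y (binorm_density sx sy rho x y).
Proof.
  rewrite binorm_density_cond. apply (is_derive_scal (fun y => Phi (/ cond_sd * y + - (cond_mean x / cond_sd)))).
  apply is_derive_comp_affine, is_derive_Phi.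
Qed.

Lemma continuous_binorm_density x y : continuous (binorm_density sx sy rho x) y.
Proof.
  apply (continuous_ext (fun y => normal_pdf sx x * (/ cond_sd * phi (/ cond_sd * y + - (cond_mean x / cond_sd))))).
  { intros; symmetry; apply binorm_density_cond. }
  apply (continuous_mult (fun _ => normal_pdf sx x)); [apply continuous_const|].
  apply (continuous_mult (fun _ => / cond_sd)); [apply continuous_const|].
  apply continuous_comp_affine, continuous_phi.
Qed.

Lemma is_lim_cond_cdf_p_infty x : is_lim (cond_cdf x) p_infty (normal_pdf sx x).
Proof.
  pose proof (is_lim_scal_l _ (normal_pdf sx x) _ _
    (is_lim_Phi_affine_p_infty (/ cond_sd) (- (cond_mean x / cond_sd)) (Rinv_0_lt_compat _ cond_sd_gt0))) as H.
  simpl in H. rewrite Rmult_1_r in H. exact H.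
Qed.

Lemma is_lim_cond_cdf_m_infty x : is_lim (cond_cdf x) m_infty 0.
Proof.
  pose proof (is_lim_scal_l _ (normal_pdf sx x) _ _
    (is_lim_Phi_affine_m_infty (/ cond_sd) (- (cond_mean x / cond_sd)) (Rinv_0_lt_compat _ cond_sd_gt0))) as H.
  simpl in H. rewrite Rmult_0_r in H. exact H.
Qed.

Lemma is_derive_R_const (c y : R) : is_derive (fun _ : R => c) y 0.
Proof. apply (is_derive_const (K := R_AbsRing) (V := R_NormedModule)). Qed.

Lemma is_int_R_binorm_density_above x p :
  is_int_R (fun y => binorm_density sx sy rho x y * (if Rlt_dec p y then 1 else 0))
    (normal_pdf sx x - cond_cdf x p).
Proof.
  replace (normal_pdf sx x - cond_cdf x p) with ((0 - 0) + (normal_pdf sx x - cond_cdf x p)) by ring.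
  apply (is_int_R_piecewise _ (fun _ => 0) (binorm_density sx sy rho x) (fun _ => 0) (cond_cdf x) p).
  - intros; apply is_derive_R_const.
  - intros; apply continuous_const.
  - apply is_derive_cond_cdf.
  - apply continuous_binorm_density.
  - intros y Hy. destruct (Rlt_dec p y); [lra | ring].
  - intros y Hy. destruct (Rlt_dec p y); [ring | lra].
  - apply is_lim_const.
  - apply is_lim_cond_cdf_p_infty.
Qed.

Lemma is_int_R_binorm_density_below x p :
  is_int_R (fun y => binorm_density sx sy rho x y * (if Rlt_dec y p then 1 else 0)) (cond_cdf x p).
Proof.
  replace (cond_cdf x p) with ((cond_cdf x p - 0) + (0 - 0)) by ring.
  apply (is_int_R_piecewise _ (binorm_density sx sy rho x) (fun _ => 0) (cond_cdf x) (fun _ => 0) p).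
  - apply is_derive_cond_cdf.
  - apply continuous_binorm_density.
  - intros; apply is_derive_R_const.
  - intros; apply continuous_const.
  - intros y Hy. destruct (Rlt_dec y p); [ring | lra].
  - intros y Hy. destruct (Rlt_dec y p); [lra | ring].
  - apply is_lim_cond_cdf_m_infty.
  - apply is_lim_const.
Qed.

Lemma is_int_R_binorm_density_const x c :
  is_int_R (fun y => binorm_density sx sy rho x y * c) (normal_pdf sx x * c).
Proof.
  replace (normal_pdf sx x * c) with ((c * cond_cdf x 0 - c * 0) + (c * normal_pdf sx x - c * cond_cdf x 0)) by ring.
  apply (is_int_R_piecewise _ (fun y => c * binorm_density sx sy rho x y) (fun y => c * binorm_density sx sy rho x y)
           (fun y => c * cond_cdf x y) (fun y => c * cond_cdf x y) 0).
  - intros; apply (is_derive_scal (cond_cdf x)), is_derive_cond_cdf.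
  - intros; apply (continuous_mult (fun _ => c)); [apply continuous_const | apply continuous_binorm_density].
  - intros; apply (is_derive_scal (cond_cdf x)), is_derive_cond_cdf.
  - intros; apply (continuous_mult (fun _ => c)); [apply continuous_const | apply continuous_binorm_density].
  - intros; ring.
  - intros; ring.
  - apply (is_lim_scal_l (cond_cdf x) c m_infty 0), is_lim_cond_cdf_m_infty.
  - apply (is_lim_scal_l (cond_cdf x) c p_infty (normal_pdf sx x)), is_lim_cond_cdf_p_infty.
Qed.



Lemma lin_sd_sq C S : lin_sd C S * lin_sd C S = C ^ 2 * sx ^ 2 + 2 * rho * sx * sy * C * S + S ^ 2 * sy ^ 2.
Proof.
  apply sqrt_sqrt.
  replace (C ^ 2 * sx ^ 2 + 2 * rho * sx * sy * C * S + S ^ 2 * sy ^ 2)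
    with ((C * sx + rho * S * sy) ^ 2 + (1 - rho ^ 2) * (S * sy) ^ 2) by ring.
  assert (0 <= (1 - rho ^ 2) * (S * sy) ^ 2) by (apply Rmult_le_pos; [nra | apply pow2_ge_0]).
  pose proof (pow2_ge_0 (C * sx + rho * S * sy)). lra.
Qed.

Lemma lin_sd_gt0 C S : C <> 0 \/ S <> 0 -> 0 < lin_sd C S.
Proof.
  intros HCS. apply sqrt_lt_R0.
  replace (C ^ 2 * sx ^ 2 + 2 * rho * sx * sy * C * S + S ^ 2 * sy ^ 2)
    with ((C * sx + rho * S * sy) ^ 2 + (1 - rho ^ 2) * (S * sy) ^ 2) by ring.
  pose proof (pow2_ge_0 (C * sx + rho * S * sy)).
  destruct (Req_dec S 0) as [HS|HS].
  - subst S. destruct HCS as [HC|HC]; [|lra].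
    replace (C * sx + rho * 0 * sy) with (C * sx) by ring.
    assert (0 < (C * sx) ^ 2) by (apply pow2_gt_0, Rmult_integral_contrapositive; split; lra). nra.
  - assert (0 < (S * sy) ^ 2) by (apply pow2_gt_0, Rmult_integral_contrapositive; split; lra).
    assert (0 < (1 - rho ^ 2) * (S * sy) ^ 2) by (apply Rmult_lt_0_compat; nra). lra.
Qed.

Lemma lin_sd_opp C S : lin_sd (- C) (- S) = lin_sd C S.
Proof. unfold lin_sd. f_equal. ring. Qed.

Lemma lin_sd_S0 C : lin_sd C 0 = Rabs C * sx.
Proof.
  unfold lin_sd. rewrite <- (sqrt_pow2 (Rabs C * sx)) by (pose proof (Rabs_pos C); nra).
  f_equal. rewrite Rpow_mult_distr, pow2_abs. ring.
Qed.

Lemma mix_sd_halfplane C S : S <> 0 ->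
  mix_sd sx ((C + rho * sy / sx * S) / (Rabs S * cond_sd)) = lin_sd C S / (Rabs S * cond_sd).
Proof.
  intros HS. pose proof cond_sd_gt0 as Ht. assert (HaS : 0 < Rabs S) by (apply Rabs_pos_lt; auto).
  assert (HCS : C <> 0 \/ S <> 0) by auto. pose proof (lin_sd_gt0 C S HCS).
  unfold mix_sd. apply sqrt_lem_1.
  - pose proof (pow2_ge_0 ((C + rho * sy / sx * S) / (Rabs S * cond_sd))). pose proof (pow2_ge_0 sx). nra.
  - apply Rlt_le, Rdiv_lt_0_compat; [lra | apply Rmult_lt_0_compat; lra].
  - replace (lin_sd C S / (Rabs S * cond_sd) * (lin_sd C S / (Rabs S * cond_sd)))
      with (lin_sd C S * lin_sd C S / ((Rabs S * Rabs S) * (cond_sd * cond_sd))) by (field; lra).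
    rewrite lin_sd_sq, <- Rabs_mult, Rabs_right by (apply Rle_ge; nra).
    replace (cond_sd * cond_sd) with (sy ^ 2 * sqrt (1 - rho ^ 2) ^ 2) by (unfold cond_sd; ring).
    rewrite sqrt_1_rho2_sq. unfold cond_sd.
    replace (((C + rho * sy / sx * S) / (Rabs S * (sy * sqrt (1 - rho ^ 2)))) ^ 2)
      with ((C + rho * sy / sx * S) ^ 2 / (S ^ 2 * (sy ^ 2 * sqrt (1 - rho ^ 2) ^ 2))).
    + rewrite sqrt_1_rho2_sq. field. repeat split; nra.
    + rewrite <- (pow2_abs S). assert (0 < sqrt (1 - rho ^ 2)) by (apply sqrt_lt_R0; nra).
      field. repeat split; lra.
Qed.

(* The half-plane is, in [y], a half-line starting at [(m - C x) / S]. *)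
Lemma is_int_R_binorm_halfplane C S m x : S <> 0 ->
  is_int_R (fun y => binorm_density sx sy rho x y * ind_halfplane C S m x y)
    (normal_pdf sx x * Phi ((C + rho * sy / sx * S) / (Rabs S * cond_sd) * x + - m / (Rabs S * cond_sd))).
Proof.
  intros HS. pose proof cond_sd_gt0 as Ht. set (p := (m - C * x) / S).
  destruct (Rlt_dec 0 S) as [Hp|Hn].
  - apply (is_int_R_ext (fun y => binorm_density sx sy rho x y * (if Rlt_dec p y then 1 else 0))).
    { intros y. unfold ind_halfplane, p. f_equal.
      destruct (Rlt_dec ((m - C * x) / S) y) as [H1|H1], (Rlt_dec m (C * x + S * y)) as [H2|H2];
        auto; exfalso; apply H2 || apply H1.
      - apply (Rmult_lt_compat_l S) in H1; auto. replace (S * ((m - C * x) / S)) with (m - C * x) in H1 by (field; lra). lra.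
      - apply (Rmult_lt_reg_l S); auto. replace (S * ((m - C * x) / S)) with (m - C * x) by (field; lra). lra. }
    replace (normal_pdf sx x * Phi _) with (normal_pdf sx x - cond_cdf x p).
    { apply is_int_R_binorm_density_above. }
    unfold cond_cdf, cond_mean, p. rewrite Rabs_right by lra.
    rewrite <- (Rmult_1_r (normal_pdf sx x)) at 1. rewrite <- Rmult_minus_distr_l, <- Phi_opp.
    do 2 f_equal. field. lra.
  - assert (Hn' : S < 0) by lra.
    apply (is_int_R_ext (fun y => binorm_density sx sy rho x y * (if Rlt_dec y p then 1 else 0))).
    { intros y. unfold ind_halfplane, p. f_equal.
      destruct (Rlt_dec y ((m - C * x) / S)) as [H1|H1], (Rlt_dec m (C * x + S * y)) as [H2|H2];
        auto; exfalso; apply H2 || apply H1.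
      - apply (Rmult_lt_compat_l (- S)) in H1; [|lra].
        replace (- S * ((m - C * x) / S)) with (- (m - C * x)) in H1 by (field; lra). lra.
      - apply (Rmult_lt_reg_l (- S)); [lra|].
        replace (- S * ((m - C * x) / S)) with (- (m - C * x)) by (field; lra). lra. }
    replace (normal_pdf sx x * Phi _) with (cond_cdf x p).
    { apply is_int_R_binorm_density_below. }
    unfold cond_cdf, cond_mean, p. rewrite Rabs_left by lra.
    do 2 f_equal. field. lra.
Qed.

Lemma is_prob_halfplane_S_neq0 C S m : S <> 0 ->
  is_prob sx sy rho (ind_halfplane C S m) (1 - Phi (m / lin_sd C S)).
Proof.
  intros HS. pose proof cond_sd_gt0. assert (HaS : 0 < Rabs S) by (apply Rabs_pos_lt; auto).
  assert (HCS : C <> 0 \/ S <> 0) by auto. pose proof (lin_sd_gt0 C S HCS).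
  eexists. split; [intros x; apply is_int_R_binorm_halfplane; exact HS|].
  replace (1 - Phi (m / lin_sd C S))
    with (Phi (- m / (Rabs S * cond_sd) / mix_sd sx ((C + rho * sy / sx * S) / (Rabs S * cond_sd)))).
  { apply is_int_R_normal_pdf_Phi_affine; exact hsx. }
  rewrite mix_sd_halfplane by exact HS. rewrite <- Phi_opp. f_equal. field. repeat split; lra.
Qed.

Lemma is_prob_halfplane_S0 C m : C <> 0 ->
  is_prob sx sy rho (ind_halfplane C 0 m) (1 - Phi (m / lin_sd C 0)).
Proof.
  intros HC. rewrite lin_sd_S0.
  exists (fun x => normal_pdf sx x * if Rlt_dec m (C * x) then 1 else 0). split.
  { intros x. apply (is_int_R_ext (fun y => binorm_density sx sy rho x y * if Rlt_dec m (C * x) then 1 else 0)).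
    - intros y. unfold ind_halfplane. rewrite Rmult_0_l, Rplus_0_r. reflexivity.
    - apply is_int_R_binorm_density_const. }
  assert (Lp : is_lim (fun y => Phi (y / sx)) p_infty 1).
  { apply (is_lim_ext (fun y => Phi (/ sx * y + 0))); [intros; f_equal; field; lra|].
    apply is_lim_Phi_affine_p_infty, Rinv_0_lt_compat, hsx. }
  assert (Lm : is_lim (fun y => Phi (y / sx)) m_infty 0).
  { apply (is_lim_ext (fun y => Phi (/ sx * y + 0))); [intros; f_equal; field; lra|].
    apply is_lim_Phi_affine_m_infty, Rinv_0_lt_compat, hsx. }
  destruct (Rlt_dec 0 C) as [Hp|Hn].
  - rewrite Rabs_right by lra.
    replace (1 - Phi (m / (C * sx))) with ((0 - 0) + (1 - Phi (m / C / sx))).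
    2: { replace (m / C / sx) with (m / (C * sx)) by (field; lra). ring. }
    apply (is_int_R_piecewise _ (fun _ => 0) (normal_pdf sx) (fun _ => 0) (fun y => Phi (y / sx)) (m / C));
      auto using is_derive_R_const, is_lim_const, is_derive_Phi_div, continuous_normal_pdf.
    + intros; apply continuous_const.
    + intros y Hy. destruct (Rlt_dec m (C * y)) as [H|H]; [|ring]. exfalso.
      apply (Rmult_lt_compat_l C) in Hy; auto. replace (C * (m / C)) with m in Hy by (field; lra). lra.
    + intros y Hy. destruct (Rlt_dec m (C * y)) as [H|H]; [ring|]. exfalso.
      apply (Rmult_lt_compat_l C) in Hy; auto. replace (C * (m / C)) with m in Hy by (field; lra). lra.
  - assert (Hn' : C < 0) by lra. rewrite Rabs_left by lra.
    replace (1 - Phi (m / (- C * sx))) with ((Phi (m / C / sx) - 0) + (0 - 0)).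
    2: { replace (m / (- C * sx)) with (- (m / C / sx)) by (field; lra). rewrite Phi_opp. ring. }
    apply (is_int_R_piecewise _ (normal_pdf sx) (fun _ => 0) (fun y => Phi (y / sx)) (fun _ => 0) (m / C));
      auto using is_derive_R_const, is_lim_const, is_derive_Phi_div, continuous_normal_pdf.
    + intros; apply continuous_const.
    + intros y Hy. destruct (Rlt_dec m (C * y)) as [H|H]; [ring|]. exfalso.
      apply (Rmult_lt_compat_l (- C)) in Hy; [|lra]. replace (- C * (m / C)) with (- m) in Hy by (field; lra). lra.
    + intros y Hy. destruct (Rlt_dec m (C * y)) as [H|H]; [|ring]. exfalso.
      apply (Rmult_lt_compat_l (- C)) in Hy; [|lra]. replace (- C * (m / C)) with (- m) in Hy by (field; lra). lra.
Qed.

Lemma prob_halfplane C S m : C <> 0 \/ S <> 0 ->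
  prob sx sy rho (ind_halfplane C S m) = 1 - Phi (m / lin_sd C S).
Proof.
  intros HCS. apply prob_of_is_prob. destruct (Req_dec S 0) as [->|HS].
  - destruct HCS as [HC|HC]; [apply is_prob_halfplane_S0; exact HC | lra].
  - apply is_prob_halfplane_S_neq0; exact HS.
Qed.

End Bivariate.

(** * The payoff against the diagonal point *)

Lemma ind_C1_halfplane (b : R) r C S : 0 < r ->
  ind_C1 (b + r * C, b + r * S) (b, b) = ind_halfplane C S (b * (C + S) + r / 2 * (C ^ 2 + S ^ 2)).
Proof.
  intros Hr. apply functional_extensionality; intros x; apply functional_extensionality; intros y.
  unfold ind_C1, ind_halfplane, sqdist; simpl.
  (* the squared distances differ by [2 r (m - (C x + S y))], [m] the third argument *)
  destruct (Rlt_dec _ _) as [H1|H1], (Rlt_dec _ _) as [H2|H2]; auto; exfalso; nra.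
Qed.

Lemma ind_C2_halfplane (b : R) r C S : 0 < r ->
  ind_C2 (b + r * C, b + r * S) (b, b)
  = ind_halfplane (- C) (- S) (- (b * (C + S) + r / 2 * (C ^ 2 + S ^ 2))).
Proof.
  intros Hr. apply functional_extensionality; intros x; apply functional_extensionality; intros y.
  unfold ind_C2, ind_halfplane, sqdist; simpl.
  destruct (Rlt_dec _ _) as [H1|H1], (Rlt_dec _ _) as [H2|H2]; auto; exfalso; nra.
Qed.

(* [b (C + S) + r / 2] is the distance from the origin to the bisector of the two points,
   measured along [(C, S)]. *)
Lemma K_diag_shift sx sy rho (b r C S : R) : 0 < sx -> 0 < sy -> -1 < rho < 1 -> 0 < r ->
  C ^ 2 + S ^ 2 = 1 ->
  K sx sy rho (b + r * C, b + r * S) (b, b)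
  = (2 * b + r * (C + S)) * (1 - Phi ((b * (C + S) + r / 2) / lin_sd sx sy rho C S))
    + 2 * b * Phi ((b * (C + S) + r / 2) / lin_sd sx sy rho C S).
Proof.
  intros Hsx Hsy Hrho Hr HCS. set (u := (b * (C + S) + r / 2) / lin_sd sx sy rho C S).
  assert (HCS0 : C <> 0 \/ S <> 0) by (destruct (Req_dec C 0); [right; intros ->|left]; nra).
  assert (HCS0' : - C <> 0 \/ - S <> 0) by (destruct HCS0; [left|right]; lra).
  pose proof (lin_sd_gt0 sx sy rho Hsx Hsy Hrho C S HCS0).
  assert (Hneq : pt_eqb (b + r * C, b + r * S) (b, b) = false).
  { unfold pt_eqb; simpl. destruct (Req_EM_T _ _) as [e1|e1]; auto.
    destruct (Req_EM_T _ _) as [e2|e2]; auto. exfalso.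
    assert (r * C = 0) by lra. assert (r * S = 0) by lra. destruct HCS0 as [HC|HC]; nra. }
  unfold K. rewrite Hneq, ind_C1_halfplane, ind_C2_halfplane, HCS, Rmult_1_r by exact Hr. simpl.
  rewrite !prob_halfplane, lin_sd_opp by auto.
  replace (- (b * (C + S) + r / 2) / lin_sd sx sy rho C S) with (- u) by (unfold u; field; lra).
  rewrite Phi_opp. fold u. ring.
Qed.

Lemma cos_neg_le_sin th : PI / 2 < th -> th <= 5 * PI / 4 -> cos th < 0 /\ cos th <= sin th.
Proof.
  intros H1 H2. pose proof PI_RGT_0 as Hpi. split; [apply cos_lt_0; lra|].
  assert (H : 0 <= sin (th - PI / 4)) by (apply sin_ge_0; lra).
  rewrite sin_minus, cos_PI4, sin_PI4 in H.
  assert (0 < sqrt 2) by (apply sqrt_lt_R0; lra).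
  apply (Rmult_le_compat_r (sqrt 2)) in H; [|lra].
  replace ((sin th * (1 / sqrt 2) - cos th * (1 / sqrt 2)) * sqrt 2) with (sin th - cos th) in H by (field; lra).
  lra.
Qed.

(* Dividing by [C^4] with [T = S / C in [-1, 1]], this reads
   [(a + 2 b + d) (1 + T^2)^2 - (1 + T)^2 (a + 2 b T + d T^2) = (T - 1) B >= 0], [B <= 0]. *)
Lemma sum_sq_mul_quad_form_le a b d C S : 0 < a -> a < d -> 0 <= b ->
  C < 0 -> C <= S -> S <= - C -> C ^ 2 + S ^ 2 = 1 ->
  (C + S) ^ 2 * (C ^ 2 * a + 2 * b * C * S + S ^ 2 * d) <= a + 2 * b + d.
Proof.
  intros Ha Had Hb HC H1 H2 H3.
  set (T := S / C). assert (HS : S = T * C) by (unfold T; field; lra).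
  assert (HT1 : T <= 1) by (apply (Rmult_le_reg_r (- C)); [lra | unfold T; replace (S / C * - C) with (- S) by (field; lra); lra]).
  assert (HT2 : -1 <= T) by (apply (Rmult_le_reg_r (- C)); [lra | unfold T; replace (S / C * - C) with (- S) by (field; lra); lra]).
  assert (HC2 : C ^ 2 * (1 + T ^ 2) = 1) by (transitivity (C ^ 2 + S ^ 2); [rewrite HS; ring | exact H3]).
  set (B := a * (T ^ 3 + T ^ 2 + 2 * T) + 2 * b * (T ^ 3 - 1) - d * (2 * T ^ 2 + T + 1)).
  assert (HB0 : B <= 0).
  { assert (T ^ 3 <= 1) by (destruct (Rle_dec 0 T); nra).
    assert (2 * b * (T ^ 3 - 1) <= 0) by nra.
    assert (0 < 2 * T ^ 2 + T + 1) by nra.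
    assert (- d * (2 * T ^ 2 + T + 1) <= - a * (2 * T ^ 2 + T + 1)) by nra.
    assert (a * (T - 1) <= 0) by nra.
    assert (a * (T - 1) * (T ^ 2 + 1) <= 0) by (assert (0 < T ^ 2 + 1) by nra; nra).
    replace (a * (T - 1) * (T ^ 2 + 1)) with (a * (T ^ 3 + T ^ 2 + 2 * T) - a * (2 * T ^ 2 + T + 1)) in * by ring.
    unfold B. lra. }
  assert (Hid : (a + 2 * b + d) * (1 + T ^ 2) ^ 2 - (1 + T) ^ 2 * (a + 2 * b * T + d * T ^ 2) = (T - 1) * B)
    by (unfold B; ring).
  replace ((C + S) ^ 2 * (C ^ 2 * a + 2 * b * C * S + S ^ 2 * d))
    with ((C ^ 2) ^ 2 * ((1 + T) ^ 2 * (a + 2 * b * T + d * T ^ 2))) by (rewrite HS; ring).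
  replace (a + 2 * b + d) with ((C ^ 2) ^ 2 * ((a + 2 * b + d) * (1 + T ^ 2) ^ 2))
    by (replace ((C ^ 2) ^ 2 * ((a + 2 * b + d) * (1 + T ^ 2) ^ 2))
          with ((a + 2 * b + d) * (C ^ 2 * (1 + T ^ 2)) ^ 2) by ring; rewrite HC2; ring).
  apply Rmult_le_compat_l; [apply pow2_ge_0 | nra].
Qed.

Lemma lin_sd_arc_le sx sy rho C S : 0 < sx -> sx < sy -> 0 < rho -> rho < 1 ->
  C < 0 -> C <= S -> S <= - C -> C ^ 2 + S ^ 2 = 1 ->
  - (C + S) * lin_sd sx sy rho C S <= lin_sd sx sy rho 1 1.
Proof.
  intros Hsx Hs Hr0 Hr1 HC H1 H2 H3.
  assert (Hsy : 0 < sy) by lra. assert (Hr : -1 < rho < 1) by lra.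
  assert (HCS : C <> 0 \/ S <> 0) by (left; lra).
  pose proof (lin_sd_gt0 sx sy rho Hsx Hsy Hr C S HCS).
  pose proof (lin_sd_gt0 sx sy rho Hsx Hsy Hr 1 1 ltac:(left; lra)).
  apply Rsqr_incr_0_var; [|lra]. unfold Rsqr.
  replace (- (C + S) * lin_sd sx sy rho C S * (- (C + S) * lin_sd sx sy rho C S))
    with ((C + S) ^ 2 * (lin_sd sx sy rho C S * lin_sd sx sy rho C S)) by ring.
  rewrite !lin_sd_sq by auto.
  pose proof (sum_sq_mul_quad_form_le (sx ^ 2) (rho * sx * sy) (sy ^ 2) C S) as Hq.
  assert (0 < rho * sx * sy) by (apply Rmult_lt_0_compat; [apply Rmult_lt_0_compat|]; lra).
  assert (sx ^ 2 < sy ^ 2) by nra.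
  replace (C ^ 2 * sx ^ 2 + 2 * rho * sx * sy * C * S + S ^ 2 * sy ^ 2)
    with (C ^ 2 * sx ^ 2 + 2 * (rho * sx * sy) * C * S + S ^ 2 * sy ^ 2) by ring.
  replace (1 ^ 2 * sx ^ 2 + 2 * rho * sx * sy * 1 * 1 + 1 ^ 2 * sy ^ 2)
    with (sx ^ 2 + 2 * (rho * sx * sy) + sy ^ 2) by ring.
  apply Hq; nra.
Qed.

Lemma x2star_lin_sd sx sy rho : 0 < sx -> 0 < sy -> 0 < rho ->
  x2star sx sy rho = sqrt (2 * PI) / 4 * lin_sd sx sy rho 1 1.
Proof.
  intros. unfold x2star, lin_sd. rewrite sqrt_mult; [|pose proof PI_RGT_0; lra|].
  - replace (1 ^ 2 * sx ^ 2 + 2 * rho * sx * sy * 1 * 1 + 1 ^ 2 * sy ^ 2)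
      with (sx ^ 2 + 2 * rho * sx * sy + sy ^ 2) by ring. field.
  - assert (0 < rho * sx * sy) by (apply Rmult_lt_0_compat; [apply Rmult_lt_0_compat|]; lra). nra.
Qed.

(* The bound reduces to [gap u > 0] through [k^2 <= 2] and [k sg <= s]. *)
Lemma diag_shift_payoff_pos s sg k u : 0 < s -> 0 < u -> 0 <= k -> k ^ 2 <= 2 -> k * sg <= s ->
  0 < 2 * (sqrt (2 * PI) / 4 * s) - 2 * (sg * u + sqrt (2 * PI) / 4 * s * k) * k * (1 - Phi u).
Proof.
  intros Hs Hu Hk Hk2 Hks.
  pose proof (gap_gt0 u Hu) as Hg. unfold gap in Hg.
  pose proof (Phi_bounds u). pose proof sqrt_2PI_gt0.
  set (xs := sqrt (2 * PI) / 4 * s). assert (Hxs : 0 < xs) by (unfold xs; nra).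
  assert (E1 : xs * (1 - 2 * (1 - Phi u)) <= xs * (1 - k ^ 2 * (1 - Phi u))) by (apply Rmult_le_compat_l; nra).
  assert (E2 : k * sg * u * (1 - Phi u) <= s * u * (1 - Phi u)).
  { assert (0 <= u * (1 - Phi u)) by nra. nra. }
  assert (E3 : xs * (1 - 2 * (1 - Phi u)) - s * u * (1 - Phi u) =
               s * (sqrt (2 * PI) / 4 * (2 * Phi u - 1) - u * (1 - Phi u))) by (unfold xs; field).
  assert (0 < s * (sqrt (2 * PI) / 4 * (2 * Phi u - 1) - u * (1 - Phi u))) by (apply Rmult_lt_0_compat; lra).
  nra.
Qed.

Theorem mainTheorem13 (sx sy rho : R) (hsx : 0 < sx) (hsy : 0 < sy)
  (hrho0 : 0 < rho) (hrho1 : rho < 1) (hs : sx < sy)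
  (thM : R) (hthM1 : PI / 2 < thM) (hthM2 : thM < PI)
  (hthM3 : tan thM = c_const sx sy rho - sqrt (c_const sx sy rho ^ 2 + 1))
  (r th : R) (hr : 0 < r) (hth1 : thM <= th) (hth2 : th <= 5 * PI / 4) :
  let xs := x2star sx sy rho in
  let x1 := xs + r * cos th in
  let y1 := xs + r * sin th in
  (x1, y1) <> (- xs, - xs) ->
  x1 ^ 2 + y1 ^ 2 > 2 * xs ^ 2 ->
  K sx sy rho (x1, y1) (xs, xs) > 0.
Proof.
  intros xs x1 y1 _ Hfar. assert (Hrho : -1 < rho < 1) by lra.
  destruct (cos_neg_le_sin th ltac:(lra) hth2) as [HC HCS_le].
  set (C := cos th) in *. set (S := sin th) in *.
  assert (HCS : C ^ 2 + S ^ 2 = 1) by (pose proof (sin2_cos2 th) as E; unfold Rsqr in E; unfold C, S; lra).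
  set (s := lin_sd sx sy rho 1 1). set (sg := lin_sd sx sy rho C S).
  assert (Hs : 0 < s) by (apply lin_sd_gt0; auto; lra).
  assert (Hsg : 0 < sg) by (apply lin_sd_gt0; auto; lra).
  assert (Hxs : xs = sqrt (2 * PI) / 4 * s) by (apply x2star_lin_sd; auto).
  assert (Hxs0 : 0 < xs) by (rewrite Hxs; pose proof sqrt_2PI_gt0; nra).
  unfold x1, y1. rewrite K_diag_shift by auto. fold sg.
  set (u := (xs * (C + S) + r / 2) / sg).
  assert (Hu : 0 < u).
  { apply Rdiv_lt_0_compat; [|exact Hsg]. unfold x1, y1 in Hfar. nra. }
  pose proof (Phi_bounds u).
  destruct (Rle_dec 0 (C + S)) as [Hp|Hn].
  { assert (0 <= r * (C + S) * (1 - Phi u)) by (apply Rmult_le_pos; [apply Rmult_le_pos|]; lra). nra. }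
  set (k := - (C + S)).
  assert (Hks : k * sg <= s) by (apply lin_sd_arc_le; auto; lra).
  assert (Hr : r = 2 * (sg * u + xs * k)) by (unfold u, k; field; lra).
  pose proof (diag_shift_payoff_pos s sg k u Hs Hu ltac:(unfold k; lra) ltac:(unfold k; nra) Hks).
  rewrite <- Hxs in H0. rewrite Hr. replace (C + S) with (- k) by (unfold k; ring). nra.
Qed.
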